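(* Let $T$ be an $\omega_1$-tree that is not special. Suppose that for every node $u\in T$ of limit height a set $C(T,u)\subseteq\{t\in T:t<u\}$ of order type $\omega$, cofinal below $u$, is given. Let $C\subseteq\omega_1$ be a club. Then there exist $\alpha\in C$, a node $v\in T^\alpha$, and nodes $\{u_n:n\in\omega\}$ of limit height with $v< u_n$ for all $n$, such that the set $\bigcup_{n\in\omega}C(T,u_n)\cap\{t\in T:t<v\}$ is infinite.
   Context: An $\omega_1$-tree is a tree of height $\omega_1$ all of whose levels $T^\alpha$ (nodes of height $\alpha$) are countable. $T$ is special if it is a union of countably many antichains. A club is a closed unbounded subset of $\omega_1$. *)

From Stdlib Require Import List.

Definition countable_set {A : Type} (P : A -> Prop) : Prop :=
  exists f : A -> nat, forall x y, P x -> P y -> f x = f y -> x = y.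

Definition finite_set {A : Type} (P : A -> Prop) : Prop :=
  exists l : list A, forall x, P x -> In x l.

Definition infinite_set {A : Type} (P : A -> Prop) : Prop := ~ finite_set P.

Definition is_omega1 (O : Type) (lt : O -> O -> Prop) : Prop :=
  well_founded lt /\
  (forall a b c, lt a b -> lt b c -> lt a c) /\
  (forall a b, lt a b \/ a = b \/ lt b a) /\
  ~ countable_set (fun _ : O => True) /\
  (forall a, countable_set (fun b => lt b a)).

Definition is_limit {O : Type} (lt : O -> O -> Prop) (a : O) : Prop :=
  (exists b, lt b a) /\ (forall b, lt b a -> exists c, lt b c /\ lt c a).

Definition is_club {O : Type} (lt : O -> O -> Prop) (C : O -> Prop) : Prop :=
  (forall b, exists a, C a /\ lt b a) /\
  (forall a, is_limit lt a ->
     (forall b, lt b a -> exists c, C c /\ lt b c /\ lt c a) -> C a).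

(* (T, ltT) is a tree with height function ht into omega_1 = (O, lt):
   strict partial order, predecessors of every node form a chain, ht is
   strictly monotone and the predecessors of t realize every height below
   ht t (so ht t is the order type of the predecessors of t). *)
Definition is_tree_with_height {O T : Type} (lt : O -> O -> Prop)
  (ltT : T -> T -> Prop) (ht : T -> O) : Prop :=
  (forall t, ~ ltT t t) /\
  (forall r s t, ltT r s -> ltT s t -> ltT r t) /\
  (forall r s t, ltT r t -> ltT s t -> ltT r s \/ r = s \/ ltT s r) /\
  (forall s t, ltT s t -> lt (ht s) (ht t)) /\
  (forall t a, lt a (ht t) -> exists s, ltT s t /\ ht s = a).

Definition level {O T : Type} (ht : T -> O) (a : O) : T -> Prop :=
  fun t => ht t = a.

Definition is_omega1_tree {O T : Type} (lt : O -> O -> Prop)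
  (ltT : T -> T -> Prop) (ht : T -> O) : Prop :=
  is_tree_with_height lt ltT ht /\
  (forall a, exists t, ht t = a) /\
  (forall a, countable_set (level ht a)).

Definition antichain {T : Type} (ltT : T -> T -> Prop) (A : T -> Prop) : Prop :=
  forall s t, A s -> A t -> s <> t -> ~ ltT s t /\ ~ ltT t s.

Definition special {T : Type} (ltT : T -> T -> Prop) : Prop :=
  exists A : nat -> T -> Prop,
    (forall n, antichain ltT (A n)) /\ (forall t, exists n, A n t).

(* S (a subset of the chain below u) has order type omega *)
Definition order_type_omega {T : Type} (ltT : T -> T -> Prop) (S : T -> Prop) : Prop :=
  infinite_set S /\ (forall s, S s -> finite_set (fun r => S r /\ ltT r s)).

Definition good_ladder {T : Type} (ltT : T -> T -> Prop) (u : T) (S : T -> Prop) : Prop :=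
  (forall t, S t -> ltT t u) /\
  order_type_omega ltT S /\
  (forall s, ltT s u -> exists t, S t /\ ltT s t).

From Stdlib Require Import Wellfounded Cantor Classical ClassicalEpsilon.

(* Suppose the theorem fails.  Then, for every node v at a level in C, only
   finitely many points of ladders C(T,w) of limit nodes w above v lie below
   v: otherwise countably many such ladders witness the theorem.  So every
   limit node u at a level in C has a ladder point c(u) that does not lie in
   the ladder of any limit node above u.  Map each non-root node t to a
   predecessor together with a natural number:
   - if ht t is a limit in C, to c(t) with 0;
   - if ht t is a successor, to its immediate predecessor with 1;
   - if ht t is a limit outside C, to its predecessor at a height g with no
     point of C in (g, ht t), with 2 + an index of t among the countably
     many nodes below the next point of C after g.
   Nodes with the same code form an antichain, and iterating the code down
   the tree yields a natural-number labelling whose fibers are antichains,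
   so T is special. *)

Lemma to_nat_inj (p q : nat * nat) : Cantor.to_nat p = Cantor.to_nat q -> p = q.
Proof.
  intro E. rewrite <- (Cantor.cancel_of_to p), <- (Cantor.cancel_of_to q), E.
  reflexivity.
Qed.

Lemma countable_set_subset {A : Type} (P Q : A -> Prop) :
  (forall x, P x -> Q x) -> countable_set Q -> countable_set P.
Proof. intros PQ [f Hf]. exists f. auto. Qed.

Lemma infinite_set_superset {A : Type} (P Q : A -> Prop) :
  (forall x, P x -> Q x) -> infinite_set P -> infinite_set Q.
Proof. intros PQ HP [l Hl]. apply HP. exists l. auto. Qed.

Lemma infinite_set_inhabited {A : Type} (P : A -> Prop) :
  infinite_set P -> exists x, P x.
Proof.
  intro HP. apply NNPP. intro N. apply HP. exists nil.
  intros x Px. exfalso. eauto.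
Qed.

Lemma infinite_not_sub_finite {A : Type} (S X : A -> Prop) :
  infinite_set S -> finite_set X -> exists x, S x /\ ~ X x.
Proof.
  intros HS [l Hl]. apply NNPP. intro N. apply HS. exists l.
  intros x Sx. apply Hl. apply NNPP. eauto.
Qed.

(* Choose one witness per value of the injection of [P] into [nat]. *)
Lemma countable_witnesses {A W : Type} (P : A -> Prop) (Q : W -> Prop)
  (R : W -> A -> Prop) :
  countable_set P -> (exists x, P x) ->
  (forall x, P x -> exists w, Q w /\ R w x) ->
  exists u : nat -> W, (forall k, Q (u k)) /\ (forall x, P x -> exists k, R (u k) x).
Proof.
  intros [f Hf] [x0 Px0] HR.
  destruct (choice (fun k w => Q w /\ forall x, P x -> f x = k -> R w x)) as [u Hu].
  - intro k. destruct (classic (exists x, P x /\ f x = k)) as [[x [Px Ex]]|N].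
    + destruct (HR x Px) as [w [Qw Rw]]. exists w. split; [exact Qw|].
      intros y Py Ey. replace y with x; [exact Rw|]. apply Hf; congruence.
    + destruct (HR x0 Px0) as [w [Qw _]]. exists w. split; [exact Qw|].
      intros x Px Ex. exfalso. eauto.
  - exists u. split; [intro k; apply Hu|].
    intros x Px. exists (f x). apply (proj2 (Hu (f x))); auto.
Qed.

Lemma countable_below_height {O T : Type} (lt : O -> O -> Prop) (ht : T -> O) :
  (forall a, countable_set (fun b => lt b a)) ->
  (forall a, countable_set (level ht a)) ->
  forall c, countable_set (fun t => lt (ht t) c).
Proof.
  intros cnt lcnt c.
  destruct (cnt c) as [h Hh].
  destruct (choice (fun a (g : T -> nat) =>
      forall x y, level ht a x -> level ht a y -> g x = g y -> x = y) lcnt)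
    as [idx Hidx].
  exists (fun t => Cantor.to_nat (h (ht t), idx (ht t) t)).
  intros t1 t2 H1 H2 E. apply to_nat_inj in E. injection E as E1 E2.
  assert (Eh : ht t1 = ht t2) by (apply Hh; auto).
  rewrite Eh in E2. apply (Hidx (ht t2)); unfold level; auto.
Qed.

Definition nonroot {O T : Type} (lt : O -> O -> Prop) (ht : T -> O) (t : T) : Prop :=
  exists b, lt b (ht t).

Section Coding.

Variables (O T : Type) (lt : O -> O -> Prop) (ltT : T -> T -> Prop) (ht : T -> O).
Hypothesis wf_lt : well_founded lt.
Hypothesis tree : is_tree_with_height lt ltT ht.

Lemma regressive_label_exists (f : T -> T) (n : T -> nat) :
  (forall t, nonroot lt ht t -> ltT (f t) t) ->
  exists label : T -> nat,
    (forall t, nonroot lt ht t -> label t = S (Cantor.to_nat (n t, label (f t)))) /\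
    (forall t, ~ nonroot lt ht t -> label t = 0).
Proof.
  intro Hreg. destruct tree as [_ [_ [_ [mono _]]]].
  set (R := fun x y : T => lt (ht x) (ht y)).
  assert (wfR : well_founded R) by exact (wf_inverse_image T O lt ht wf_lt).
  assert (Hdec : forall t, nonroot lt ht t -> R (f t) t) by (intros; apply mono, Hreg; auto).
  set (Fb := fun t (rec : forall y, R y t -> nat) =>
     match excluded_middle_informative (nonroot lt ht t) with
     | left H => S (Cantor.to_nat (n t, rec (f t) (Hdec t H)))
     | right _ => 0 end).
  assert (Heq : forall t, Fix wfR _ Fb t = Fb t (fun y _ => Fix wfR _ Fb y)).
  { apply (@Fix_eq T R wfR (fun _ => nat) Fb). intros x g1 g2 Hg. unfold Fb.
    destruct (excluded_middle_informative _); [rewrite Hg|]; reflexivity. }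
  exists (Fix wfR _ Fb). split; intros t Ht; rewrite Heq; unfold Fb;
    destruct (excluded_middle_informative _); easy.
Qed.

Lemma special_of_coding (K : T -> T -> nat -> Prop) :
  (forall t, nonroot lt ht t -> exists p k, ltT p t /\ K t p k) ->
  (forall s t p k, K s p k -> K t p k -> ~ ltT s t) ->
  special ltT.
Proof.
  intros Hcode Hfib. destruct tree as [_ [tr [ch [mono _]]]].
  destruct (choice (fun t (pk : T * nat) =>
      nonroot lt ht t -> ltT (fst pk) t /\ K t (fst pk) (snd pk))) as [code Hc].
  { intro t. destruct (classic (nonroot lt ht t)) as [Nt|Nt].
    - destruct (Hcode t Nt) as [p [k Hpk]]. exists (p, k). auto.
    - exists (t, 0). contradiction. }
  set (f := fun t => fst (code t)). set (n := fun t => snd (code t)).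
  destruct (regressive_label_exists f n) as [label [Hnr Hr]];
    [intros t Nt; apply Hc, Nt|].
  assert (Key : forall t s, ltT s t -> label s <> label t).
  { intro t. induction (wf_inverse_image T O lt ht wf_lt t) as [t _ IH].
    intros s Hst Hl.
    assert (Nt : nonroot lt ht t) by (exists (ht s); apply mono, Hst).
    destruct (classic (nonroot lt ht s)) as [Ns|Ns];
      [|rewrite (Hr s Ns), (Hnr t Nt) in Hl; discriminate].
    rewrite (Hnr s Ns), (Hnr t Nt) in Hl. apply eq_add_S in Hl.
    apply to_nat_inj in Hl. injection Hl as En Ef.
    destruct (Hc s Ns) as [Hfs Ks]. destruct (Hc t Nt) as [Hft Kt].
    assert (Hfst : ltT (f s) t) by (apply tr with s; auto).
    destruct (ch _ _ _ Hfst Hft) as [H|[H|H]].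
    - exact (IH (f t) (mono _ _ Hft) (f s) H Ef).
    - apply (Hfib s t (f s) (n s) Ks); [|exact Hst].
      rewrite H, En. exact Kt.
    - exact (IH (f s) (mono _ _ Hfst) (f t) H (eq_sym Ef)). }
  exists (fun k t => label t = k). split.
  - intros k s t Hs Ht _. split; intro H; [apply (Key t s H)|apply (Key s t H)];
      congruence.
  - intro t. exists (label t). reflexivity.
Qed.

End Coding.

Section Ladders.

Variables (O T : Type) (lt : O -> O -> Prop) (ltT : T -> T -> Prop) (ht : T -> O).
Variables (CT : T -> T -> Prop) (C : O -> Prop).
Hypothesis omega1 : is_omega1 O lt.
Hypothesis omega1_tree : is_omega1_tree lt ltT ht.
Hypothesis ladders : forall u, is_limit lt (ht u) -> good_ladder ltT u (CT u).
Hypothesis club : is_club lt C.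

Definition ladder_trace (v t : T) : Prop :=
  ltT t v /\ exists w, is_limit lt (ht w) /\ ltT v w /\ CT w t.

Definition ladder_code (t p : T) : Prop :=
  is_limit lt (ht t) /\ CT t p /\ ~ ladder_trace t p.

Definition immediate_pred (t p : T) : Prop :=
  ltT p t /\ forall d, ~ (lt (ht p) d /\ lt d (ht t)).

Definition club_gap (g : O) (t : T) : Prop :=
  lt g (ht t) /\ ~ C (ht t) /\ forall d, C d -> lt g d -> ~ lt d (ht t).

Lemma witness_of_infinite_trace (v : T) :
  infinite_set (ladder_trace v) ->
  exists u : nat -> T,
    (forall n, is_limit lt (ht (u n)) /\ ltT v (u n)) /\
    infinite_set (fun t => (exists n, CT (u n) t) /\ ltT t v).
Proof.
  intro Hinf.
  destruct omega1 as [_ [_ [_ [_ cnt]]]].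
  destruct omega1_tree as [[_ [_ [_ [mono _]]]] [_ lcnt]].
  destruct (countable_witnesses (ladder_trace v)
      (fun w => is_limit lt (ht w) /\ ltT v w) (fun w t => CT w t))
    as [u [Hu Hcov]].
  - apply (countable_set_subset _ (fun t => lt (ht t) (ht v))).
    + intros t [Htv _]. apply mono, Htv.
    + exact (countable_below_height lt ht cnt lcnt (ht v)).
  - exact (infinite_set_inhabited _ Hinf).
  - intros t [_ [w [Lw [Hvw Hw]]]]. eauto.
  - exists u. split; [exact Hu|]. refine (infinite_set_superset _ _ _ Hinf).
    intros t Ht. split; [exact (Hcov t Ht)|exact (proj1 Ht)].
Qed.

Lemma exists_ladder_code (t : T) :
  is_limit lt (ht t) -> finite_set (ladder_trace t) ->
  exists p, ltT p t /\ ladder_code t p.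
Proof.
  intros Lt Hfin. destruct (ladders t Lt) as [Hsub [[Hinf _] _]].
  destruct (infinite_not_sub_finite _ _ Hinf Hfin) as [p [Hp Np]].
  exists p. split; [exact (Hsub p Hp)|]. split; [exact Lt|]. split; assumption.
Qed.

(* If s < t had the same ladder code p, then p would be a point of the ladder
   of t lying below s, i.e. a point of the trace at s. *)
Lemma ladder_code_antichain (s t p : T) :
  ladder_code s p -> ladder_code t p -> ~ ltT s t.
Proof.
  intros [Ls [Hs Ns]] [Lt [Ht _]] Hst. apply Ns. split.
  - exact (proj1 (ladders s Ls) p Hs).
  - exists t. auto.
Qed.

Lemma exists_immediate_pred (t : T) :
  nonroot lt ht t -> ~ is_limit lt (ht t) -> exists p, immediate_pred t p.
Proof.
  intros Nt Lt. destruct omega1_tree as [[_ [_ [_ [_ ex]]]] _].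
  assert (Hb : exists b, lt b (ht t) /\ forall d, ~ (lt b d /\ lt d (ht t))).
  { apply NNPP. intro N. apply Lt. split; [exact Nt|].
    intros b Hb. apply NNPP. intro M. apply N. exists b. split; [exact Hb|].
    intros d Hd. apply M. exists d. exact Hd. }
  destruct Hb as [b [Hb Nb]]. destruct (ex t b Hb) as [p [Hpt <-]].
  exists p. split; assumption.
Qed.

Lemma immediate_pred_antichain (s t p : T) :
  immediate_pred s p -> immediate_pred t p -> ~ ltT s t.
Proof.
  intros [Hps _] [_ Nt] Hst. destruct omega1_tree as [[_ [_ [_ [mono _]]]] _].
  apply (Nt (ht s)). split; apply mono; assumption.
Qed.

Lemma exists_club_gap_pred (t : T) :
  is_limit lt (ht t) -> ~ C (ht t) -> exists p, ltT p t /\ club_gap (ht p) t.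
Proof.
  intros Lt Ct. destruct club as [_ Ccl].
  destruct omega1_tree as [[_ [_ [_ [_ ex]]]] _].
  assert (Hg : exists g, lt g (ht t) /\ forall d, C d -> lt g d -> ~ lt d (ht t)).
  { apply NNPP. intro N. apply Ct, Ccl; [exact Lt|].
    intros b Hb. apply NNPP. intro M. apply N. exists b. split; [exact Hb|].
    intros d Cd Hbd Hdt. apply M. eauto. }
  destruct Hg as [g [Hg Ng]]. destruct (ex t g Hg) as [p [Hpt <-]].
  exists p. repeat split; assumption.
Qed.

(* Every node in the gap above g lies below the first point of C after g. *)
Lemma countable_club_gap (g : O) : countable_set (club_gap g).
Proof.
  destruct omega1 as [_ [_ [tri [_ cnt]]]].
  destruct omega1_tree as [_ [_ lcnt]].
  destruct club as [Cunb _]. destruct (Cunb g) as [d [Cd Hgd]].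
  apply (countable_set_subset _ (fun t => lt (ht t) d));
    [|exact (countable_below_height lt ht cnt lcnt d)].
  intros t [_ [Ct Nt]].
  destruct (tri (ht t) d) as [H|[H|H]]; [exact H| |]; exfalso.
  - apply Ct. rewrite H. exact Cd.
  - exact (Nt d Cd Hgd H).
Qed.

Lemma special_of_finite_traces :
  (forall v, C (ht v) -> is_limit lt (ht v) -> finite_set (ladder_trace v)) ->
  special ltT.
Proof.
  intro Hfin. destruct omega1 as [wf _].
  destruct omega1_tree as [Htree _]. pose proof Htree as [irr _].
  destruct (choice (fun g (J : T -> nat) =>
      forall x y, club_gap g x -> club_gap g y -> J x = J y -> x = y)
      countable_club_gap) as [J HJ].
  apply (special_of_coding O T lt ltT ht wf Htree (fun t p k =>
     (k = 0 /\ ladder_code t p) \/ (k = 1 /\ immediate_pred t p) \/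
     (k = S (S (J (ht p) t)) /\ club_gap (ht p) t))).
  - intros t Nt. destruct (classic (is_limit lt (ht t))) as [Lt|Lt].
    + destruct (classic (C (ht t))) as [Ct|Ct].
      * destruct (exists_ladder_code t Lt (Hfin t Ct Lt)) as [p [Hpt Hp]].
        exists p, 0. auto.
      * destruct (exists_club_gap_pred t Lt Ct) as [p [Hpt Hp]].
        exists p, (S (S (J (ht p) t))). auto.
    + destruct (exists_immediate_pred t Nt Lt) as [p Hp].
      exists p, 1. split; [exact (proj1 Hp)|auto].
  - intros s t p k Hs Ht Hst.
    destruct Hs as [[-> Hs]|[[-> Hs]|[-> Hs]]];
      destruct Ht as [[E Ht]|[[E Ht]|[E Ht]]]; try discriminate E.
    + exact (ladder_code_antichain s t p Hs Ht Hst).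
    + exact (immediate_pred_antichain s t p Hs Ht Hst).
    + injection E as E. rewrite (HJ (ht p) s t Hs Ht E) in Hst.
      exact (irr t Hst).
Qed.

End Ladders.

Theorem mainTheorem4 (O : Type) (lt : O -> O -> Prop)
  (T : Type) (ltT : T -> T -> Prop) (ht : T -> O)
  (CT : T -> T -> Prop) (C : O -> Prop) :
  is_omega1 O lt ->
  is_omega1_tree lt ltT ht ->
  ~ special ltT ->
  (forall u, is_limit lt (ht u) -> good_ladder ltT u (CT u)) ->
  is_club lt C ->
  exists (a : O) (v : T) (u : nat -> T),
    C a /\ ht v = a /\
    (forall n, is_limit lt (ht (u n)) /\ ltT v (u n)) /\
    infinite_set (fun t => (exists n, CT (u n) t) /\ ltT t v).
Proof.
  intros omega1 omega1_tree Hns ladders club.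
  apply NNPP. intro Hneg. apply Hns.
  apply (special_of_finite_traces O T lt ltT ht CT C omega1 omega1_tree ladders club).
  intros v Cv _. apply NNPP. intro Hinf.
  destruct (witness_of_infinite_trace O T lt ltT ht CT omega1 omega1_tree v Hinf)
    as [u [Hu Hu_inf]].
  apply Hneg. exists (ht v), v, u. auto.
Qed.
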